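(* Let $W$ satisfy the mixing assumptions in the context, and consider the iterates $\mathbf{x}^{(k)}=[x_1^{(k)};\dots;x_m^{(k)}]\in\mathbb{R}^{mn}$ of Algorithm DDS-F (described in the context), where all poll directions are unit vectors and the stepsizes satisfy $\alpha_i^{(k)}\le\alpha^{(k)}_{\max}$ for all $i,k$, for a positive sequence $\{\alpha^{(k)}_{\max}\}$. Let $\zeta:=\max(|\lambda_2(W)|,|\lambda_m(W)|)$, let $C_W\ge0$ be a constant with $\|\widehat W^j-A_m\|\le C_W\zeta^j$ for all $j\in\mathbb{N}$, and let $C_\zeta\ge0$ be a constant with $\sum_{j=0}^k\zeta^{k-j}\alpha^{(j)}_{\max}\le C_\zeta\alpha^{(k)}_{\max}$ for all $k\in\mathbb{N}$. Then for every $k\ge1$, $$\left\|\mathbf{x}^{(k)}-A_m\mathbf{x}^{(k)}\right\|\le\sqrt{m}\,C_W\left(\|\mathbf{x}^{(0)}\|\zeta^k+C_\zeta\alpha^{(k-1)}_{\max}\right).$$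
   Context: Setting: $m$ agents on an undirected connected graph $\mathcal{G}=(\{1,\dots,m\},\mathcal{E})$; $\mathcal{N}_i=\{j\neq i:(i,j)\in\mathcal{E}\}$. Mixing assumptions on $W=[w_{ij}]\in\mathbb{R}^{m\times m}$ with eigenvalues $\lambda_1(W)\ge\dots\ge\lambda_m(W)$: $W$ symmetric with nonnegative entries, $w_{ij}>0$ iff $i=j$ or $j\in\mathcal{N}_i$; $\lambda_1(W)=1$, $\lambda_2(W)<1$; $W\mathbf{1}=\mathbf{1}$; $-1<\lambda_m(W)\le0$. Notation: $\widehat W=W\otimes I_n$, $A_m=\frac1m(\mathbf{1}_m\mathbf{1}_m^\mathrm{T})\otimes I_n$. Algorithm DDS-F (local functions $f_i:\mathbb{R}^n\to\mathbb{R}$, forcing function $\rho:\mathbb{R}^+\to\mathbb{R}^+$, poll sets $D_i^{(k)}\subset\mathbb{R}^n$, stepsizes $\alpha_i^{(k)}>0$): start from $x_1^{(0)}=\dots=x_m^{(0)}$. At iteration $k$, each agent $i$ checks whether some $d\in D^{(k)}_i$ satisfies $f_i(x_i^{(k)}+\alpha_i^{(k)}d)\le f_i(x_i^{(k)})-\rho(\alpha_i^{(k)})$. If so, $x_i^{(k+1)}=\sum_{j\in\mathcal{N}_i\cup\{i\}}w_{ij}x_j^{(k)}+\alpha_i^{(k)}d$ (successful for $i$); otherwise $x_i^{(k+1)}=\sum_{j\in\mathcal{N}_i\cup\{i\}}w_{ij}x_j^{(k)}$ (unsuccessful for $i$). *)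

From HB Require Import structures.
From mathcomp Require Import all_boot all_order all_algebra.
From mathcomp Require Import classical_sets reals.
Set Implicit Arguments. Unset Strict Implicit. Unset Printing Implicit Defensive.
Import Order.TTheory GRing.Theory Num.Theory.
Local Open Scope ring_scope.
Local Open Scope classical_set_scope.

(* Decompose an index of 'I_(m*n) into a pair (block index, coordinate), the
   inverse of mxvec_index: block i of a vector in R^(mn) is x_i in R^n. *)
Definition split_idx (m n : nat) (k : 'I_(m * n)) : 'I_m * 'I_n :=
  enum_val (cast_ord (esym (mxvec_cast m n)) k).

Definition kron (R : pzRingType) (m1 n1 m2 n2 : nat)
  (A : 'M[R]_(m1, n1)) (B : 'M[R]_(m2, n2)) : 'M[R]_(m1 * m2, n1 * n2) :=
  \matrix_(i, j) (A (split_idx i).1 (split_idx j).1 * B (split_idx i).2 (split_idx j).2).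

Definition stack (R : Type) (m n : nat) (X : 'M[R]_(m, n)) : 'cV[R]_(m * n) :=
  \col_k X (split_idx k).1 (split_idx k).2.

Definition rnorm (R : realType) (n : nat) (v : 'rV[R]_n) : R :=
  Num.sqrt (\sum_j v 0 j ^+ 2).
Definition vnorm (R : realType) (N : nat) (v : 'cV[R]_N) : R :=
  Num.sqrt (\sum_i v i 0 ^+ 2).

Definition opnorm (R : realType) (N : nat) (M : 'M[R]_N) : R :=
  sup [set vnorm (M *m v) | v in [set v : 'cV[R]_N | vnorm v <= 1]].

Definition hatW (R : realType) (m n : nat) (W : 'M[R]_m) : 'M[R]_(m * n) :=
  kron W (1%:M : 'M[R]_n).
Definition Am (R : realType) (m n : nat) : 'M[R]_(m * n) :=
  kron ((m%:R)^-1 *: (const_mx 1 : 'M[R]_m)) (1%:M : 'M[R]_n).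

(* Mixing assumptions on W for the graph with (symmetric, irreflexive,
   connected) edge relation e on {1..m}; lam is the list of eigenvalues
   of W (with multiplicity) sorted nonincreasingly. *)
Definition graph_ok (m : nat) (e : rel 'I_m) : Prop :=
  symmetric e /\ irreflexive e /\ (forall i j, connect e i j).

Definition mixing (R : realType) (m : nat) (e : rel 'I_m) (W : 'M[R]_m)
  (lam : seq R) : Prop :=
  W^T = W /\
  (forall i j, 0 <= W i j) /\
  (forall i j, 0 < W i j <-> (i = j \/ e i j)) /\
  (size lam = m /\ sorted (>=%R) lam /\
     char_poly W = \prod_(l <- lam) ('X - l%:P)) /\
  lam`_0 = 1 /\ lam`_1 < 1 /\
  W *m (const_mx 1 : 'cV[R]_m) = const_mx 1 /\
  -1 < lam`_(m.-1) /\ lam`_(m.-1) <= 0.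

Definition ddsf_step (R : realType) (m n : nat) (e : rel 'I_m) (W : 'M[R]_m)
  (f : 'I_m -> 'rV[R]_n -> R) (rho : R -> R)
  (D : nat -> 'I_m -> 'rV[R]_n -> Prop) (alpha : nat -> 'I_m -> R)
  (x : nat -> 'I_m -> 'rV[R]_n) (k : nat) (i : 'I_m) : Prop :=
  let mix := \sum_(j | (j == i) || e i j) W i j *: x k j in
  (exists d, D k i d /\
     f i (x k i + alpha k i *: d) <= f i (x k i) - rho (alpha k i) /\
     x k.+1 i = mix + alpha k i *: d)
  \/
  ((forall d, D k i d ->
      ~ (f i (x k i + alpha k i *: d) <= f i (x k i) - rho (alpha k i))) /\
   x k.+1 i = mix).

Definition xstack (R : realType) (m n : nat) (x : nat -> 'I_m -> 'rV[R]_n)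
  (k : nat) : 'cV[R]_(m * n) :=
  stack (\matrix_(i, j) x k i 0 j).

Set Warnings "-notation-overridden,-ambiguous-paths".
From HB Require Import structures.
From mathcomp Require Import all_boot all_order all_algebra.
From mathcomp Require Import classical_sets reals.
From mathcomp Require Import ring lra.
Import Order.TTheory GRing.Theory Num.Theory.
Set Implicit Arguments.
Unset Strict Implicit.
Unset Printing Implicit Defensive.
Local Open Scope ring_scope.

(* Stacking the agents, one DDS-F iteration reads x^(k+1) = Ŵ x^(k) + g^(k),
   where block i of g^(k) is either 0 or alpha_i^(k) d with |d| = 1, so that
   |g^(k)| <= sqrt m alpha_max^(k).  Since 1^T W = 1^T we have A_m Ŵ = A_m, and
   unrolling the recursion gives
     x^(k+1) - A_m x^(k+1) = (Ŵ^(k+1) - A_m) x^(0) + sum_j (Ŵ^(k-j) - A_m) g^(j).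
   Bounding each operator norm by C_W zeta^j and the resulting weighted sum of
   stepsizes by C_zeta alpha_max^(k) gives the claim, sqrt m >= 1 absorbing the
   first term. *)

Section EuclideanNorm.
Variable R : realType.

Lemma cauchy_schwarz (I : finType) (u v : I -> R) :
  (\sum_i u i * v i) ^+ 2 <= (\sum_i u i ^+ 2) * (\sum_i v i ^+ 2).
Proof.
(* Lagrange's identity: the gap is half the sum of the squares (u_i v_j - u_j v_i)^2. *)
have lagrange : \sum_i \sum_j (u i * v j - u j * v i) ^+ 2 =
    2 * ((\sum_i u i ^+ 2) * (\sum_i v i ^+ 2) - (\sum_i u i * v i) ^+ 2).
  have expand i j : (u i * v j - u j * v i) ^+ 2 =
      u i ^+ 2 * v j ^+ 2 + v i ^+ 2 * u j ^+ 2 - 2 * ((u i * v i) * (u j * v j)).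
    by ring.
  under eq_bigr do under eq_bigr do rewrite expand.
  under eq_bigr do rewrite sumrB big_split /= -!mulr_sumr.
  by rewrite sumrB big_split /= -!mulr_suml -mulr_sumr -mulr_suml expr2; ring.
have : 0 <= \sum_i \sum_j (u i * v j - u j * v i) ^+ 2.
  by apply: sumr_ge0 => i _; apply: sumr_ge0 => j _; apply: sqr_ge0.
by rewrite lagrange pmulr_rge0 // subr_ge0.
Qed.

Lemma sqrtr_le (a b : R) : 0 <= b -> a <= b ^+ 2 -> Num.sqrt a <= b.
Proof. by move=> b_ge0 ab; rewrite -(ger0_norm b_ge0) -sqrtr_sqr ler_wsqrtr. Qed.

Lemma vnorm_ge0 N (v : 'cV[R]_N) : 0 <= vnorm v.
Proof. exact: sqrtr_ge0. Qed.

Lemma vnorm_sqr N (v : 'cV[R]_N) : vnorm v ^+ 2 = \sum_i v i 0 ^+ 2.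
Proof. by rewrite sqr_sqrtr // sumr_ge0 // => i _; apply: sqr_ge0. Qed.

Lemma vnorm0 N : vnorm (0 : 'cV[R]_N) = 0.
Proof. by rewrite /vnorm big1 ?sqrtr0 // => i _; rewrite mxE expr0n. Qed.

Lemma vnorm_eq0 N (v : 'cV[R]_N) : vnorm v = 0 -> v = 0.
Proof.
move=> v0; apply/colP => i; rewrite mxE; apply/eqP; rewrite -sqrf_eq0.
have /eqP := vnorm_sqr v; rewrite v0 expr0n eq_sym psumr_eq0 /=.
  by move=> /allP/(_ i (mem_index_enum _)).
by move=> j _; apply: sqr_ge0.
Qed.

Lemma vnormZ N (c : R) (v : 'cV[R]_N) : vnorm (c *: v) = `|c| * vnorm v.
Proof.
rewrite /vnorm -sqrtr_sqr -sqrtrM ?sqr_ge0 // mulr_sumr.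
by congr Num.sqrt; apply: eq_bigr => i _; rewrite mxE exprMn.
Qed.

Lemma vnormD N (a b : 'cV[R]_N) : vnorm (a + b) <= vnorm a + vnorm b.
Proof.
apply: sqrtr_le; first by rewrite addr_ge0 ?vnorm_ge0.
have dot_le : \sum_i a i 0 * b i 0 <= vnorm a * vnorm b.
  apply: le_trans (ler_norm _) _.
  rewrite -ler_sqr ?nnegrE ?mulr_ge0 ?vnorm_ge0 // real_normK ?num_real //.
  by rewrite exprMn !vnorm_sqr cauchy_schwarz.
have -> : \sum_i (a + b) i 0 ^+ 2 =
    vnorm a ^+ 2 + 2 * \sum_i a i 0 * b i 0 + vnorm b ^+ 2.
  rewrite !vnorm_sqr mulr_sumr -!big_split /=.
  by apply: eq_bigr => i _; rewrite mxE; ring.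
by have := vnorm_ge0 a; have := vnorm_ge0 b; nra.
Qed.

Lemma vnorm_sum N (I : Type) (r : seq I) (P : pred I) (F : I -> 'cV[R]_N) :
  vnorm (\sum_(i <- r | P i) F i) <= \sum_(i <- r | P i) vnorm (F i).
Proof.
apply: (big_rec2 (fun a b => vnorm a <= b)); first by rewrite vnorm0.
by move=> i a b _ IH; apply: le_trans (vnormD _ _) _; rewrite lerD2l.
Qed.

Lemma vnorm_mulmx_frobenius N (M : 'M[R]_N) (v : 'cV[R]_N) :
  vnorm v <= 1 -> vnorm (M *m v) <= Num.sqrt (\sum_i \sum_j M i j ^+ 2).
Proof.
move=> v_le1; apply: ler_wsqrtr; apply: ler_sum => i _.
have v2_le1 : \sum_j v j 0 ^+ 2 <= 1 by rewrite -vnorm_sqr expr_le1 ?vnorm_ge0.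
rewrite mxE; apply: le_trans (cauchy_schwarz (M i) (fun j => v j 0)) _.
by rewrite ler_piMr // sumr_ge0 // => j _; apply: sqr_ge0.
Qed.

Lemma vnorm_mulmx_le_opnorm N (M : 'M[R]_N) (v : 'cV[R]_N) :
  vnorm (M *m v) <= opnorm M * vnorm v.
Proof.
have unit_ball w : vnorm w <= 1 -> vnorm (M *m w) <= opnorm M.
  move=> w_le1; apply: ub_le_sup; last by exists w.
  exists (Num.sqrt (\sum_i \sum_j M i j ^+ 2)) => _ [u u_le1 <-].
  exact: vnorm_mulmx_frobenius.
have [/vnorm_eq0 -> | v_neq0] := eqVneq (vnorm v) 0.
  by rewrite mulmx0 vnorm0 mulr0.
have v_gt0 : 0 < vnorm v by rewrite lt_def v_neq0 vnorm_ge0.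
have := unit_ball ((vnorm v)^-1 *: v).
rewrite -scalemxAr !vnormZ ger0_norm ?invr_ge0 ?vnorm_ge0 // mulVf // lexx.
by rewrite mulrC ler_pdivrMr // => /(_ isT).
Qed.

Lemma rnorm_trmx n (v : 'rV[R]_n) : rnorm v = vnorm v^T.
Proof. by rewrite /rnorm /vnorm; under [in RHS]eq_bigr do rewrite mxE. Qed.

End EuclideanNorm.

Lemma split_idxK m n (i : 'I_m) (j : 'I_n) : split_idx (mxvec_index i j) = (i, j).
Proof. by rewrite /split_idx /mxvec_index cast_ordK enum_rankK. Qed.

Lemma sum_split_idx (V : nmodType) m n (F : 'I_m -> 'I_n -> V) :
  \sum_(k < m * n) F (split_idx k).1 (split_idx k).2 = \sum_i \sum_j F i j.
Proof.
rewrite (reindex _ (curry_mxvec_bij _ _)) /= pair_bigA.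
by apply: eq_bigr => -[i j] _ /=; rewrite split_idxK.
Qed.

Lemma kron_mulmx (R : comPzRingType) m1 n1 p1 m2 n2 p2
    (A : 'M[R]_(m1, n1)) (B : 'M[R]_(m2, n2))
    (C : 'M[R]_(n1, p1)) (D : 'M[R]_(n2, p2)) :
  kron A B *m kron C D = kron (A *m C) (B *m D).
Proof.
apply/matrixP => i j; rewrite !mxE big_distrlr /=.
under eq_bigr do rewrite !mxE.
rewrite (sum_split_idx (fun k1 k2 =>
  A (split_idx i).1 k1 * B (split_idx i).2 k2 *
  (C k1 (split_idx j).1 * D k2 (split_idx j).2))).
by apply: eq_bigr => k1 _; apply: eq_bigr => k2 _; rewrite mulrACA.
Qed.

Lemma stackD (R : nmodType) m n (X Y : 'M[R]_(m, n)) : stack (X + Y) = stack X + stack Y.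
Proof. by apply/colP => k; rewrite !mxE. Qed.

Lemma kron1_stack (R : comPzRingType) m n (A : 'M[R]_m) (X : 'M[R]_(m, n)) :
  kron A 1%:M *m stack X = stack (A *m X).
Proof.
apply/colP => k; rewrite !mxE; under eq_bigr do rewrite !mxE.
rewrite (sum_split_idx (fun i j =>
  A (split_idx k).1 i * ((split_idx k).2 == j)%:R * X i j)).
apply: eq_bigr => i _; rewrite (bigD1 (split_idx k).2) //= eqxx mulr1 big1 ?addr0 //.
by move=> j /negbTE; rewrite eq_sym => ->; rewrite mulr0 mul0r.
Qed.

Lemma vnorm_stack_le (R : realType) m n (X : 'M[R]_(m, n)) (c : R) :
  0 <= c -> (forall i, rnorm (row i X) <= c) -> vnorm (stack X) <= Num.sqrt m%:R * c.
Proof.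
move=> c_ge0 row_le; rewrite -(ger0_norm c_ge0) -sqrtr_sqr -sqrtrM ?ler0n //.
apply: ler_wsqrtr; rewrite mulr_natl -[X in _ *+ X]card_ord -sumr_const.
under eq_bigr do rewrite mxE.
rewrite (sum_split_idx (fun i j => X i j ^+ 2)) ler_sum // => i _.
have := row_le i; rewrite -(ler_sqr (sqrtr_ge0 _)) ?nnegrE //.
rewrite sqr_sqrtr ?sumr_ge0 // => [|j _]; last exact: sqr_ge0.
by under eq_bigr do rewrite mxE.
Qed.

Section PerturbedIteration.
Variables (R : pzRingType) (N : nat) (H A : 'M[R]_N) (v g : nat -> 'cV[R]_N).
Hypothesis AH : A *m H = A.
Hypothesis v_rec : forall k, v k.+1 = H *m v k + g k.

Lemma mulmx_exp_fixed p : A *m H ^+ p = A.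
Proof.
elim: p => [|p IH]; first by rewrite expr0 -idmxE mulmx1.
by rewrite exprSr -mulmxE mulmxA IH AH.
Qed.

Lemma perturbed_iter_unroll K :
  v K.+1 = H ^+ K.+1 *m v 0 + \sum_(0 <= j < K.+1) H ^+ (K - j) *m g j.
Proof.
have H_exp p (w : 'cV[R]_N) : H *m (H ^+ p *m w) = H ^+ p.+1 *m w.
  by rewrite exprS -mulmxE mulmxA.
elim: K => [|K IH]; first by rewrite v_rec big_nat1 subnn expr1 expr0 -idmxE mul1mx.
rewrite v_rec IH mulmxDr mulmx_sumr H_exp [in RHS]big_nat_recr //=.
rewrite subnn expr0 -idmxE mul1mx addrA.
by congr (_ + _ + _); apply: eq_big_nat => j /andP[_ j_le]; rewrite H_exp subSn.
Qed.

Lemma perturbed_iter_disagreement K :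
  v K.+1 - A *m v K.+1 =
  (H ^+ K.+1 - A) *m v 0 + \sum_(0 <= j < K.+1) (H ^+ (K - j) - A) *m g j.
Proof.
rewrite {2}perturbed_iter_unroll mulmxDr mulmx_sumr mulmxA mulmx_exp_fixed.
under eq_bigr do rewrite mulmxA mulmx_exp_fixed.
rewrite {1}perturbed_iter_unroll mulmxBl.
under [in RHS]eq_bigr do rewrite mulmxBl.
by rewrite sumrB opprD addrACA.
Qed.

End PerturbedIteration.

Lemma perturbed_iter_disagreement_le (R : realType) N (H A : 'M[R]_N)
    (v g : nat -> 'cV[R]_N) (CW zeta : R) :
  A *m H = A -> (forall k, v k.+1 = H *m v k + g k) ->
  (forall j, opnorm (H ^+ j - A) <= CW * zeta ^+ j) ->
  forall K, vnorm (v K.+1 - A *m v K.+1) <=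
    CW * (zeta ^+ K.+1 * vnorm (v 0) +
          \sum_(0 <= j < K.+1) zeta ^+ (K - j) * vnorm (g j)).
Proof.
move=> AH v_rec opnorm_le K.
have term_le j (w : 'cV[R]_N) :
    vnorm ((H ^+ j - A) *m w) <= CW * (zeta ^+ j * vnorm w).
  apply: le_trans (vnorm_mulmx_le_opnorm _ _) _.
  by rewrite mulrA ler_wpM2r ?vnorm_ge0.
rewrite (perturbed_iter_disagreement AH v_rec) mulrDr mulr_sumr.
apply: le_trans (vnormD _ _) _; rewrite lerD ?term_le //.
by apply: le_trans (vnorm_sum _ _ _) _; rewrite ler_sum // => j _; apply: term_le.
Qed.

Section DDSF.
Variables (R : realType) (m n : nat) (e : rel 'I_m) (W : 'M[R]_m) (lam : seq R).
Hypothesis W_mixing : mixing e W lam.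

Lemma mixing_col_sums p : (const_mx 1 : 'M[R]_(p, m)) *m W = const_mx 1.
Proof.
case: W_mixing => W_sym [_ [_ [_ [_ [_ [W1 _]]]]]].
apply/matrixP => i j; rewrite [RHS]mxE.
transitivity ((W *m (const_mx 1 : 'cV_m)) j 0); last by rewrite W1 mxE.
by rewrite !mxE; apply: eq_bigr => l _; rewrite !mxE mul1r mulr1 -{1}W_sym mxE.
Qed.

Lemma Am_hatW : @Am R m n *m hatW n W = @Am R m n.
Proof. by rewrite /Am /hatW kron_mulmx mul1mx -scalemxAl mixing_col_sums. Qed.

Lemma mixing_sum_nbhd (y : 'I_m -> 'rV[R]_n) i :
  \sum_(j | (j == i) || e i j) W i j *: y j = \sum_j W i j *: y j.
Proof.
case: W_mixing => _ [W_ge0 [W_gt0 _]].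
rewrite big_mkcond; apply: eq_bigr => j _; case: ifP => // not_nbhd.
suff -> : W i j = 0 by rewrite scale0r.
apply/eqP; rewrite eq_le W_ge0 andbT leNgt; apply/negP => /W_gt0[ij | eij].
  by rewrite ij eqxx in not_nbhd.
by rewrite eij orbT in not_nbhd.
Qed.

Variables (f : 'I_m -> 'rV[R]_n -> R) (rho : R -> R).
Variables (D : nat -> 'I_m -> 'rV[R]_n -> Prop) (alpha : nat -> 'I_m -> R).
Variable x : nat -> 'I_m -> 'rV[R]_n.
Hypothesis D_unit : forall k i d, D k i d -> rnorm d = 1.
Hypothesis alpha_gt0 : forall k i, 0 < alpha k i.
Hypothesis x_ddsf : forall k i, ddsf_step e W f rho D alpha x k i.

Definition iterate_mx k : 'M[R]_(m, n) := \matrix_(i, j) x k i 0 j.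

Definition increment_mx k : 'M[R]_(m, n) := iterate_mx k.+1 - W *m iterate_mx k.

Lemma xstack_rec k :
  xstack x k.+1 = hatW n W *m xstack x k + stack (increment_mx k).
Proof. by rewrite /hatW kron1_stack -stackD addrC subrK. Qed.

Lemma rnorm_increment k i : rnorm (row i (increment_mx k)) <= alpha k i.
Proof.
have -> : row i (increment_mx k) = x k.+1 i - \sum_j W i j *: x k j.
  apply/rowP => j; rewrite !mxE summxE; congr (_ - _).
  by apply: eq_bigr => l _; rewrite !mxE.
case: (x_ddsf k i) => [[d [Dd [_ ->]]] | [_ ->]]; rewrite mixing_sum_nbhd.
  rewrite addrC addKr rnorm_trmx linearZ vnormZ -rnorm_trmx (D_unit Dd) mulr1.
  by rewrite ger0_norm // ltW.
by rewrite subrr rnorm_trmx trmx0 vnorm0 ltW.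
Qed.

Lemma vnorm_increment k (c : R) :
  0 <= c -> (forall i, alpha k i <= c) ->
  vnorm (stack (increment_mx k)) <= Num.sqrt m%:R * c.
Proof.
move=> c_ge0 alpha_le; apply: vnorm_stack_le c_ge0 _ => i.
exact: le_trans (rnorm_increment k i) (alpha_le i).
Qed.

End DDSF.

Theorem proposition2 (R : realType) (m n : nat) (e : rel 'I_m)
  (W : 'M[R]_m) (lam : seq R)
  (f : 'I_m -> 'rV[R]_n -> R) (rho : R -> R)
  (D : nat -> 'I_m -> 'rV[R]_n -> Prop) (alpha : nat -> 'I_m -> R)
  (amax : nat -> R) (x : nat -> 'I_m -> 'rV[R]_n) (CW Czeta : R) :
  (1 < m)%N ->
  graph_ok e ->
  mixing e W lam ->
  (forall a, 0 < a -> 0 < rho a) ->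
  (forall k i d, D k i d -> rnorm d = 1) ->
  (forall k i, 0 < alpha k i) ->
  (forall k, 0 < amax k) ->
  (forall k i, alpha k i <= amax k) ->
  (forall i j, x 0%N i = x 0%N j) ->
  (forall k i, ddsf_step e W f rho D alpha x k i) ->
  let zeta : R := Num.max `|lam`_1| `|lam`_(m.-1)| in
  0 <= CW ->
  (forall j : nat, opnorm (hatW n W ^+ j - @Am R m n) <= CW * zeta ^+ j) ->
  0 <= Czeta ->
  (forall k : nat, \sum_(0 <= j < k.+1) zeta ^+ (k - j) * amax j <= Czeta * amax k) ->
  forall k : nat, (1 <= k)%N ->
    vnorm (xstack x k - @Am R m n *m xstack x k)
      <= Num.sqrt (m%:R) * CW *
           (vnorm (xstack x 0%N) * zeta ^+ k + Czeta * amax k.-1).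
Proof.
move=> m_gt1 _ W_mixing _ D_unit alpha_gt0 amax_gt0 alpha_le _ x_ddsf zeta
  CW_ge0 opnorm_le _ zeta_sum_le [//|K] _ /=.
have zeta_ge0 : 0 <= zeta by rewrite le_max normr_ge0.
have sqrtm_ge1 : 1 <= Num.sqrt (m%:R : R).
  by rewrite -[X in X <= _]sqrtr1 ler_sqrt ?ler0n // ler1n ltnW.
have forcing_le : \sum_(0 <= j < K.+1) zeta ^+ (K - j) *
    vnorm (stack (increment_mx W x j)) <= Num.sqrt m%:R * (Czeta * amax K).
  apply: (@le_trans _ _
    (\sum_(0 <= j < K.+1) zeta ^+ (K - j) * (Num.sqrt m%:R * amax j))).
    apply: ler_sum => j _; rewrite ler_wpM2l ?exprn_ge0 //.
    exact: (vnorm_increment W_mixing D_unit alpha_gt0 x_ddsf (ltW (amax_gt0 j))).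
  under eq_bigr do rewrite mulrCA.
  by rewrite -mulr_sumr ler_wpM2l ?sqrtr_ge0.
apply: le_trans (perturbed_iter_disagreement_le (Am_hatW n W_mixing)
  (xstack_rec W x) opnorm_le K) _.
rewrite [_ * CW]mulrC -mulrA ler_wpM2l // mulrDr lerD //.
by rewrite mulrC ler_peMl // mulr_ge0 ?exprn_ge0 ?vnorm_ge0.
Qed.
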